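(* Let $\alpha,\beta,\gamma,\lambda,x$ be non-negative integers with $(\alpha,\beta,\gamma,\lambda,x)\neq(0,0,0,0,0)$. Then for every integer $n\ge0$, $$T_{n+1}^{\lambda,x}(\alpha,\beta,\gamma)=\gamma\,T_n^{\lambda,x}(\alpha,\beta,\gamma-\alpha)+x\lambda\beta\sum_{s=0}^{n}\binom{n}{s}(\gamma|\alpha)_s\,T_{n-s}^{\lambda+1,x}(\alpha,\beta,\beta-\alpha).$$
   Context: For complex numbers $c,\alpha$ and an integer $n\ge 0$ let $(c|\alpha)_n=\prod_{i=0}^{n-1}(c-i\alpha)$, with $(c|\alpha)_0=1$. Let $E_{\alpha,c}(t)=\sum_{n\ge 0}(c|\alpha)_n\,t^n/n!$, viewed as a formal power series in $t$. It equals $(1+\alpha t)^{c/\alpha}$ if $\alpha\neq0$ and $e^{ct}$ if $\alpha=0$. For complex $\alpha,\beta,\gamma,x$ and a non-negative integer $\lambda$, the numbers $T_n^{\lambda,x}(\alpha,\beta,\gamma)$, $n\ge0$, are defined by the formal power series identity $$\sum_{n\ge0}T_n^{\lambda,x}(\alpha,\beta,\gamma)\frac{t^n}{n!}=E_{\alpha,\gamma}(t)\,\bigl(1-x(E_{\alpha,\beta}(t)-1)\bigr)^{-\lambda}.$$ The third argument may be any complex number. *)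

From HB Require Import structures.
From mathcomp Require Import all_boot all_order all_algebra.
Set Implicit Arguments. Unset Strict Implicit. Unset Printing Implicit Defensive.
Import Order.TTheory GRing.Theory Num.Theory.
Local Open Scope ring_scope.

Section FPS.
Variable R : numFieldType.

Definition fps := nat -> R.

Definition fps_one : fps := fun n => (n == 0)%:R.

Definition fps_mul (f g : fps) : fps :=
  fun n => \sum_(i < n.+1) f i * g (n - i)%N.

Definition fps_pow (f : fps) (k : nat) : fps := iter k (fps_mul f) fps_one.

(* 1/(1-u) = sum_k u^k, for a series u with zero constant term;
   the coefficient of t^n only involves k <= n. *)
Definition fps_geom (u : fps) : fps :=
  fun n => \sum_(k < n.+1) fps_pow u k n.

Definition falling (c a : R) (n : nat) : R := \prod_(i < n) (c - i%:R * a).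

Definition Eser (a c : R) : fps := fun n => falling c a n / (n`!)%:R.

(* T_n^{lam,x}(a,b,c): n! times the coefficient of t^n in
   E_{a,c}(t) * (1 - x (E_{a,b}(t) - 1))^{-lam} *)
Definition Tnum (lam : nat) (x a b c : R) (n : nat) : R :=
  let u : fps := fun k => x * (Eser a b k - (k == 0)%:R) in
  (n`!)%:R * fps_mul (Eser a c) (fps_pow (fps_geom u) lam) n.

End FPS.

From HB Require Import structures.
From mathcomp Require Import all_boot all_order all_algebra.
From mathcomp Require Import zify ring.
Import Order.TTheory GRing.Theory Num.Theory.
Local Open Scope ring_scope.

(* Write E_c = E_{a,c}(t), U = x (E_{a,b}(t) - 1) and G = 1/(1-U),
   so that the generating function of T_n^{lam,x}(a,b,c) is E_c G^lam.  The
   recurrence is the coefficient form of the differential identity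
     (E_c G^lam)' = c E_{c-a} G^lam + x b lam E_c (E_{b-a} G^(lam+1)),
   which follows from E_c' = c E_{c-a}, U' = x b E_{b-a} and G' = G^2 U'
   (the last one by differentiating G (1 - U) = 1).  Taking n! times the
   coefficient of t^n, the left side gives T_{n+1}, the first term gives
   c T_n(c-a), and the product E_c H in the second term becomes a binomial
   convolution of exponential generating functions.
   Formal power series are handled through their truncations in {poly R}:
   all identities hold modulo t^N, which lets us use the polynomial
   derivative and the ring tactic. *)

Section Truncation.
Variable R : numFieldType.

Definition tr (N : nat) (f : nat -> R) : {poly R} := \poly_(i < N) f i.

Definition eqm (N : nat) (p q : {poly R}) := forall i, (i < N)%N -> p`_i = q`_i.

Lemma eqm_refl N p : eqm N p p. Proof. by []. Qed.

Lemma eqm_sym N p q : eqm N p q -> eqm N q p.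
Proof. by move=> h i hi; rewrite h. Qed.

Lemma eqm_trans N p q r : eqm N p q -> eqm N q r -> eqm N p r.
Proof. by move=> h1 h2 i hi; rewrite h1 ?h2. Qed.

Lemma eqm_le M N p q : (M <= N)%N -> eqm N p q -> eqm M p q.
Proof. by move=> hMN h i hi; apply: h; lia. Qed.

Lemma eqm_add N p p' q q' : eqm N p p' -> eqm N q q' -> eqm N (p + q) (p' + q').
Proof. by move=> h1 h2 i hi; rewrite !coefD h1 ?h2. Qed.

Lemma eqm_muln N k p p' : eqm N p p' -> eqm N (p *+ k) (p' *+ k).
Proof. by move=> h i hi; rewrite !coefMn h. Qed.

Lemma eqm_mul N p p' q q' : eqm N p p' -> eqm N q q' -> eqm N (p * q) (p' * q').
Proof.
move=> h1 h2 i hi; rewrite !coefM; apply: eq_bigr => j _.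
by have hj := ltn_ord j; rewrite h1 ?h2 //; lia.
Qed.

Lemma eqm_pow N p p' k : eqm N p p' -> eqm N (p ^+ k) (p' ^+ k).
Proof.
move=> h; elim: k => [|k IH]; first by rewrite !expr0.
by rewrite !exprS; apply: eqm_mul.
Qed.

Lemma eqm_deriv N p q : eqm N.+1 p q -> eqm N p^`() q^`().
Proof. by move=> h i hi; rewrite !coef_deriv h. Qed.

Lemma fact_coef_deriv (p : {poly R}) n :
  ((n.+1)`!)%:R * p`_n.+1 = (n`!)%:R * p^`()`_n.
Proof. by rewrite coef_deriv -mulr_natr factS natrM; ring. Qed.

Lemma tr_coef N f i : (i < N)%N -> (tr N f)`_i = f i.
Proof. by move=> hi; rewrite coef_poly hi. Qed.

Lemma tr_le M N f : (M <= N)%N -> eqm M (tr N f) (tr M f).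
Proof. by move=> hMN i hi; rewrite !tr_coef //; lia. Qed.

Lemma tr_mul N f g : eqm N (tr N (fps_mul f g)) (tr N f * tr N g).
Proof.
move=> i hi; rewrite tr_coef // coefM /fps_mul; apply: eq_bigr => j _.
by have hj := ltn_ord j; rewrite !tr_coef //; lia.
Qed.

Lemma tr_pow N f k : eqm N (tr N (fps_pow f k)) (tr N f ^+ k).
Proof.
elim: k => [|k IH].
  by rewrite expr0 => i hi; rewrite tr_coef // coef1.
by rewrite exprS; apply: eqm_trans (tr_mul _ _ _) _; apply: eqm_mul.
Qed.

End Truncation.

Arguments tr {R} N f.
Arguments eqm {R} N p q.
Arguments eqm_refl {R} N p.
Arguments tr_coef {R N} f {i}.
Arguments tr_le {R M N} f.
Arguments tr_mul {R N} f g.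
Arguments tr_pow {R} N f k.
Arguments eqm_sym {R N p q}.
Arguments eqm_trans {R N p q r}.
Arguments eqm_le {R M N p q}.
Arguments eqm_add {R N p p' q q'}.
Arguments eqm_muln {R N} k {p p'}.
Arguments eqm_mul {R N p p' q q'}.
Arguments eqm_pow {R N p p'} k.
Arguments eqm_deriv {R N p q}.

Section Geometric.
Variables (R : numFieldType) (u : nat -> R).
Hypothesis u0 : u 0%N = 0.

Lemma pow_low k m : (m < k)%N -> fps_pow u k m = 0.
Proof.
elim: k m => [|k IH] m hm //.
rewrite /fps_pow iterS -/(fps_pow u k) /fps_mul.
apply: big1 => -[[|i] hi] _ /=; first by rewrite u0 mul0r.
by rewrite IH ?mulr0 //; lia.
Qed.

Lemma geom_ext n K : (n < K)%N -> fps_geom u n = \sum_(k < K) fps_pow u k n.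
Proof.
move=> hK; rewrite /fps_geom -!(big_mkord xpredT (fun k => fps_pow u k n)).
rewrite (@big_cat_nat _ _ _ n.+1 0 K _ _ (leq0n _) hK) /= [X in _ + X]big1_seq ?addr0 //.
by move=> k /andP[_]; rewrite mem_iota => /andP[h1 h2]; apply: pow_low; lia.
Qed.

Lemma geom_rec n : fps_geom u n = (n == 0%N)%:R + fps_mul u (fps_geom u) n.
Proof.
rewrite (@geom_ext n n.+2) // big_ord_recl; congr (_ + _).
under [RHS]eq_bigr => i _.
  rewrite (@geom_ext (n - i) n.+1); last by have := ltn_ord i; lia.
  rewrite mulr_sumr; over.
by rewrite exchange_big.
Qed.

Lemma geom_inv N : eqm N (tr N (fps_geom u) * (1 - tr N u)) 1.
Proof.
move=> i hi; rewrite mulrBr mulr1 coefB tr_coef // geom_rec coef1.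
by rewrite [_ * _]mulrC -(tr_mul u (fps_geom u) i hi) tr_coef // addrK.
Qed.

End Geometric.

Arguments geom_inv {R u} u0 N.

Section InverseDerivative.
Variables (R : numFieldType) (N : nat) (G U : {poly R}).
Hypothesis GU : eqm N.+1 (G * (1 - U)) 1.

(* Differentiating G (1 - U) = 1 gives G' = G^2 U'. *)
Lemma inv_deriv : eqm N G^`() (G * G * U^`()).
Proof.
have h1 : eqm N (G^`() * (1 - U)) (G * U^`()).
  move=> i hi; have := eqm_deriv GU i hi.
  rewrite derivM derivB -polyC1 derivC sub0r coefD coefC mulrN coefN if_same.
  by move/eqP; rewrite subr_eq0 => /eqP.
have GU' : eqm N ((1 - U) * G) 1 by rewrite mulrC; apply: eqm_le GU.
apply: (@eqm_trans _ _ _ (G^`() * ((1 - U) * G))).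
  by rewrite -{1}[G^`()]mulr1; apply: eqm_mul (eqm_sym GU').
rewrite mulrA; apply: eqm_trans (eqm_mul h1 (eqm_refl _ G)) _.
by rewrite mulrAC.
Qed.

Lemma inv_pow_deriv k : eqm N (G ^+ k)^`() (U^`() * G ^+ k.+1 *+ k).
Proof.
rewrite deriv_exp; apply: eqm_trans (eqm_muln k (eqm_mul inv_deriv (eqm_refl _ _))) _.
case: k => [|k]; rewrite ?mulr0n //= !exprS.
by have -> : G * G * U^`() * G ^+ k = U^`() * (G * (G * G ^+ k)) by ring.
Qed.

End InverseDerivative.

Arguments inv_pow_deriv {R N G U} GU k.

Section ExponentialSeries.
Variable R : numFieldType.

Lemma falling_S (c a : R) n : falling c a n.+1 = c * falling (c - a) a n.
Proof.
rewrite /falling big_ord_recl /= mul0r subr0; congr (_ * _).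
by apply: eq_bigr => i _; rewrite /bump /= -natr1; ring.
Qed.

Lemma Eser_deriv N (a c : R) :
  eqm N (tr N.+1 (Eser a c))^`() (c *: tr N (Eser a (c - a))).
Proof.
move=> i hi; rewrite coef_deriv coefZ !tr_coef // /Eser falling_S factS natrM.
have hi0 : (i.+1%:R : R) != 0 by rewrite pnatr_eq0.
have hf0 : ((i`!)%:R : R) != 0 by rewrite pnatr_eq0 -lt0n fact_gt0.
by rewrite -mulr_natr; field; rewrite hf0 addrC natr1 hi0.
Qed.

Definition ufun (x a b : R) : nat -> R := fun k => x * (Eser a b k - (k == 0%N)%:R).

Lemma ufun0 x a b : ufun x a b 0%N = 0.
Proof. by rewrite /ufun /Eser /falling big_ord0 fact0 divr1 subrr mulr0. Qed.

Lemma ufun_deriv N x a b :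
  eqm N (tr N.+1 (ufun x a b))^`() ((x * b) *: tr N (Eser a (b - a))).
Proof.
move=> i hi; have := Eser_deriv N a b i hi.
rewrite !coef_deriv !coefZ !tr_coef // /ufun subr0 => h.
by rewrite -mulrnAr h mulrA.
Qed.

Lemma egf_convolution N n (a c : R) (H : {poly R}) : (n < N)%N ->
  (n`!)%:R * (tr N (Eser a c) * H)`_n =
  \sum_(s < n.+1) ('C(n, s))%:R * falling c a s * (((n - s)`!)%:R * H`_(n - s)).
Proof.
move=> hn; rewrite coefM mulr_sumr; apply: eq_bigr => s _.
have hs : (s <= n)%N by rewrite -ltnS.
rewrite tr_coef; last by lia.
have hs0 : ((s`!)%:R : R) != 0 by rewrite pnatr_eq0 -lt0n fact_gt0.
by rewrite /Eser -(bin_fact hs) !natrM; field.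
Qed.

End ExponentialSeries.

Arguments ufun {R} x a b.
Arguments ufun0 {R} x a b.
Arguments Eser_deriv {R} N a c.
Arguments ufun_deriv {R} N x a b.

Section Recurrence.
Variables (R : numFieldType) (x a b : R).

Let G (N : nat) : {poly R} := tr N (fps_geom (ufun x a b)).

Lemma Tnum_coef N K lam c m : (m < N)%N -> (N <= K)%N ->
  Tnum lam x a b c m = (m`!)%:R * (tr N (Eser a c) * G K ^+ lam)`_m.
Proof.
move=> hm hNK; congr (_ * _); rewrite -(tr_coef _ hm) (tr_mul _ _ m hm).
apply: (eqm_mul (eqm_refl _ _) _ _ hm).
apply: eqm_trans (tr_pow _ _ _) (eqm_pow _ _).
exact: eqm_sym (tr_le _ hNK).
Qed.

(* The differential equation of the generating function, modulo t^(n+1):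
   (E_c G^lam)' = E_c' G^lam + E_c (G^lam)', with E_c' = c E_{c-a} and
   (G^lam)' = lam U' G^(lam+1) = lam x b E_{b-a} G^(lam+1). *)
Lemma gen_deriv n lam c :
  eqm n.+1 (tr n.+2 (Eser a c) * G n.+2 ^+ lam)^`()
    (c *: (tr n.+1 (Eser a (c - a)) * G n.+2 ^+ lam)
     + (x * b * lam%:R) *: (tr n.+2 (Eser a c)
                            * (tr n.+1 (Eser a (b - a)) * G n.+2 ^+ lam.+1))).
Proof.
have GU := geom_inv (ufun0 x a b) n.+2.
have hG := inv_pow_deriv GU lam.
have hU := ufun_deriv n.+1 x a b.
rewrite derivM; apply: eqm_trans (eqm_add
  (eqm_mul (Eser_deriv n.+1 a c) (eqm_refl _ _))
  (eqm_mul (eqm_refl _ _) (eqm_trans hG (eqm_muln lam (eqm_mul hU (eqm_refl _ _)))))) _.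
have reassoc : forall (cP A g E xP bP B g' : {poly R}) (k : nat),
  cP * A * g + E * (xP * bP * B * g' *+ k) = cP * (A * g) + xP * bP *+ k * (E * (B * g')).
  by move=> *; rewrite mulrnAr mulrnAl; congr (_ + _ *+ _); ring.
by rewrite -!mul_polyC !polyCM polyC_natr mulr_natr reassoc; apply: eqm_refl.
Qed.

Lemma Tnum_recurrence n lam c :
  Tnum lam x a b c n.+1 =
    c * Tnum lam x a b (c - a) n
  + x * lam%:R * b *
      \sum_(s < n.+1) ('C(n, s))%:R * falling c a s
                       * Tnum lam.+1 x a b (b - a) (n - s)%N.
Proof.
rewrite (@Tnum_coef n.+2 n.+2 lam c n.+1) // fact_coef_deriv.
rewrite (gen_deriv n lam c n (ltnSn n)) coefD !coefZ mulrDr.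
rewrite (@Tnum_coef n.+1 n.+2 lam (c - a) n) // mulrCA; congr (_ + _).
rewrite mulrCA (@egf_convolution _ n.+2) // [x * _ * b]mulrAC.
congr (_ * _); apply: eq_bigr => s _; congr (_ * _).
by rewrite (@Tnum_coef n.+1 n.+2) // ltnS leq_subr.
Qed.

End Recurrence.

Theorem theorem7 (R : numFieldType) (a b c lam x : nat) :
  (a, b, c, lam, x) <> (0, 0, 0, 0, 0)%N ->
  forall n : nat,
    Tnum lam (x%:R : R) a%:R b%:R c%:R n.+1 =
      c%:R * Tnum lam (x%:R : R) a%:R b%:R (c%:R - a%:R) n
    + x%:R * lam%:R * b%:R *
        \sum_(s < n.+1) ('C(n, s))%:R * falling (c%:R : R) a%:R s
                         * Tnum lam.+1 (x%:R : R) a%:R b%:R (b%:R - a%:R) (n - s)%N.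
Proof. by move=> _ n; apply: Tnum_recurrence. Qed.
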